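(* For every $T\ge0$ and integers $0\le\ell\le k$, $a(k,T)-a(\ell,T)\le k-\ell$. In particular $a(k+1,T)\le a(k,T)+1$.
   Context: Let $\lambda>0$ and let $N$ be a Poisson process with intensity $\lambda$, arrival times $0<\sigma_1<\sigma_2<\cdots$, and natural filtration $\mathcal F_t=\sigma(N_s:s\le t)$. Let $F:[0,\infty)\to[0,\infty)$ be strictly increasing and strictly convex with $F(0)=0$. For $k\in\{0,1,\dots\}$ let $\mathcal A_k$ be the set of $(\mathcal F_t)$-adapted, integer-valued, nonnegative, non-increasing processes $\xi$ with $\xi_0=k$ whose values change only at arrival times of $N$, and $v(k,T)=\inf_{\xi\in\mathcal A_k}\mathbb E[\sum_{i:\sigma_i\le T}F(\xi_{\sigma_i-}-\xi_{\sigma_i})+F(\xi_T)]$. For $k\in\mathbb N_+$, $a(k,T)$ is the smallest minimizer over $a\in\{1,\dots,k\}$ of $v(k-a,T)+F(a)$, and $a(0,T)=0$. *)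

From HB Require Import structures.
From mathcomp Require Import all_boot all_order all_algebra.
From mathcomp Require Import all_classical all_reals all_analysis.
From mathcomp Require Import measurable_realfun.
Set Implicit Arguments. Unset Strict Implicit. Unset Printing Implicit Defensive.
Import Order.TTheory GRing.Theory Num.Theory.
Local Open Scope classical_set_scope.
Local Open Scope ring_scope.

Section Defs.
Context {R : realType} {d : measure_display} {Omega : measurableType d}.
Variable P : probability Omega R.

Definition interarrival (sigma : nat -> Omega -> R) (i : nat) : Omega -> R :=
  fun w => sigma i.+1 w - sigma i w.

(* N is a Poisson process of intensity lam with arrival times
   0 = sigma_0 < sigma_1 < sigma_2 < ... (sigma_i -> +oo on every path):
   the inter-arrival times are mutually independent Exp(lam) random variables. *)
Definition poisson_arrivals (lam : R) (sigma : nat -> Omega -> R) : Prop :=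
  [/\ (forall w, sigma 0%N w = 0),
      (forall i w, sigma i w < sigma i.+1 w),
      (forall w, (fun i => sigma i w) @ \oo --> +oo) &
      (forall i, measurable_fun setT (sigma i)) /\
      (forall i (x : R), 0 <= x ->
          P [set w | x < interarrival sigma i w] = (expR (- (lam * x)))%:E) /\
      (forall (n : nat) (B : nat -> set R), (forall i, measurable (B i)) ->
          fine (P (\bigcap_(i in `I_n) (interarrival sigma i @^-1` B i)))
          = \prod_(i < n) fine (P (interarrival sigma i @^-1` B i)))].

Definition Npr (sigma : nat -> Omega -> R) (s : R) (w : Omega) : \bar R :=
  (\sum_(i <oo) (if sigma i.+1 w <= s then 1 else 0)%:E)%E.

Definition natfilt (sigma : nat -> Omega -> R) (t : R) : set (set Omega) :=
  smallest (sigma_algebra setT)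
    [set A | exists s : R, exists B : set (\bar R),
       [/\ s <= t, measurable B & A = Npr sigma s @^-1` B]].

(* the admissible strategies A_k: integer-valued nonnegative (nat-valued),
   adapted, non-increasing, xi_0 = k, changing only at arrival times
   (hence constant on [sigma_i, sigma_(i+1)), jumps exactly at sigma_i). *)
Definition admissible (sigma : nat -> Omega -> R) (k : nat)
    (xi : R -> Omega -> nat) : Prop :=
  [/\ (forall w, xi 0 w = k),
      (forall t (n : nat), 0 <= t -> natfilt sigma t [set w | xi t w = n]),
      (forall w s t, 0 <= s -> s <= t -> (xi t w <= xi s w)%N) &
      (forall w s t, 0 <= s -> s < t ->
          (forall i, ~ (s < sigma i.+1 w /\ sigma i.+1 w <= t)) ->
          xi t w = xi s w)].

(* pathwise cost: sum over arrivals sigma_(i+1) <= T of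
   F(xi_(sigma_(i+1)-) - xi_(sigma_(i+1))) + F(xi_T);
   the left limit xi_(sigma_(i+1)-) equals xi_(sigma_i) since xi is constant
   on [sigma_i, sigma_(i+1)). *)
Definition pathcost (sigma : nat -> Omega -> R) (F : R -> R) (T : R)
    (xi : R -> Omega -> nat) (w : Omega) : \bar R :=
  ((\sum_(i <oo)
      (if sigma i.+1 w <= T
       then F ((xi (sigma i w) w - xi (sigma i.+1 w) w)%N%:R) else 0)%:E)
   + (F (xi T w)%:R)%:E)%E.

Definition value (sigma : nat -> Omega -> R) (F : R -> R) (k : nat) (T : R)
    : \bar R :=
  ereal_inf [set c | exists xi, admissible sigma k xi /\
                       c = (\int[P]_w pathcost sigma F T xi w)%E].

(* a(k,T): smallest minimizer over a in {1,..,k} of v(k-a,T) + F(a);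
   a(0,T) = 0 (iota 1 0 is empty). *)
Definition aopt (sigma : nat -> Omega -> R) (F : R -> R) (k : nat) (T : R)
    : nat :=
  head 0%N [seq a <- iota 1 k |
     all (fun b => (value sigma F (k - a) T + (F a%:R)%:E <=
                    value sigma F (k - b) T + (F b%:R)%:E)%E) (iota 1 k)].

End Defs.

(* The smallest minimiser a(k) of a |-> v(k - a) + F a over {1, ..., k} can
   grow by at most one from k to k + 1.  If a = a(k) and m = a(k + 1) > a + 1,
   add the optimality of a at k, v(k - a) + F a <= v(k - (m - 1)) + F (m - 1),
   to the convexity of F on the integers, F (a + 1) - F a <= F m - F (m - 1):
   this says that a + 1 is at least as good as m for the problem at k + 1,
   contradicting the minimality of m.
   Iterating the unit step gives a(k) <= a(l) + (k - l). *)

From HB Require Import structures.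
From mathcomp Require Import all_boot all_order all_algebra.
From mathcomp Require Import all_classical all_reals all_analysis.
From mathcomp Require Import measurable_realfun.
From mathcomp Require Import ring lra zify.
Import Order.TTheory GRing.Theory Num.Theory.
Local Open Scope classical_set_scope.
Local Open Scope ring_scope.
Set Implicit Arguments. Unset Strict Implicit.

Section LeastArgmin.
Variable R : realDomainType.

Definition least_argmin (h : nat -> R) (k : nat) : nat :=
  head 0%N [seq a <- iota 1 k | all (fun b => h a <= h b) (iota 1 k)].

Variable h : nat -> R.

Lemma argmin_exists k : (0 < k)%N ->
  exists2 c, (1 <= c <= k)%N & forall b, (1 <= b <= k)%N -> h c <= h b.
Proof.
case: k => // k _.
case: (arg_minP (fun i : 'I_k.+1 => h i.+1) (isT : predT ord0)) => i _ imin.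
exists i.+1 => [|b /andP[b_gt0 b_le]]; first exact: ltn_ord.
have bi : (b.-1 < k.+1)%N by rewrite prednK.
by have := imin (Ordinal bi) isT; rewrite /= prednK.
Qed.

Lemma mem_least_argmin_filter k c : (1 <= c <= k)%N ->
  (forall b, (1 <= b <= k)%N -> h c <= h b) ->
  c \in [seq a <- iota 1 k | all (fun b => h a <= h b) (iota 1 k)].
Proof.
move=> ck cmin; rewrite mem_filter mem_iota add1n ltnS ck andbT.
by apply/allP => b; rewrite mem_iota add1n ltnS; apply: cmin.
Qed.

Lemma least_argminP k : (0 < k)%N ->
  (1 <= least_argmin h k <= k)%N /\
  forall b, (1 <= b <= k)%N -> h (least_argmin h k) <= h b.
Proof.
case/argmin_exists => c ck cmin.
have : least_argmin h k
    \in [seq a <- iota 1 k | all (fun b => h a <= h b) (iota 1 k)].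
  move: (mem_least_argmin_filter ck cmin); rewrite /least_argmin.
  by case: [seq a <- _ | _] => // a r _; apply: mem_head.
rewrite mem_filter mem_iota add1n ltnS => /andP[/allP amin ->]; split=> // b.
by move=> bk; apply: amin; rewrite mem_iota add1n ltnS.
Qed.

Lemma least_argmin_le k c : (1 <= c <= k)%N ->
  (forall b, (1 <= b <= k)%N -> h c <= h b) -> (least_argmin h k <= c)%N.
Proof.
move=> ck /(mem_least_argmin_filter ck).
have := sorted_filter ltn_trans (fun a => all (fun b => h a <= h b) (iota 1 k))
  (iota_ltn_sorted 1 k).
rewrite /least_argmin; case: [seq a <- _ | _] => // a r.
move=> /= /(order_path_min ltn_trans)/allP ar.
by rewrite inE => /predU1P[-> //|/ar/ltnW].
Qed.

End LeastArgmin.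

Lemma least_argmin_shift (R : realDomainType) (w g : nat -> R) k :
  {homo (fun x => g x.+1 - g x) : x y / (x <= y)%N >-> x <= y} ->
  (least_argmin (fun a => (w (k.+1 - a)%N + g a)%R) k.+1
     <= least_argmin (fun a => (w (k - a)%N + g a)%R) k + 1)%N.
Proof.
move=> g_convex; set hS := fun a => _; set h := fun a => _.
case: k => [|k] in hS h *.
  by case: (least_argminP hS (ltn0Sn 0)) => /andP[_ ->].
have [/andP[a_gt0 a_le] amin] := least_argminP h (ltn0Sn k).
have [/andP[m_gt0 m_le] mmin] := least_argminP hS (ltn0Sn k.+1).
set a := least_argmin h _ in a_gt0 a_le amin *.
set m := least_argmin hS _ in m_gt0 m_le mmin *.
case: (leqP m a.+1) => [|a_lt_m]; rewrite addn1 //.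
apply: least_argmin_le => [|b /mmin]; first by rewrite !ltnS a_le.
apply: le_trans.
have a_le_m' : (a <= m.-1)%N by lia.
have m'_range : (1 <= m.-1 <= k.+1)%N by lia.
have := amin _ m'_range; have := g_convex _ _ a_le_m'.
rewrite /h /hS (prednK m_gt0) (_ : k.+2 - m = k.+1 - m.-1)%N; first lra.
by rewrite -{1}(prednK m_gt0) subSS.
Qed.

Lemma convex_nat_increments (R : realFieldType) (F : R -> R) :
  (forall x y t, 0 <= x -> 0 <= y -> x != y -> 0 < t -> t < 1 ->
     F (t * x + (1 - t) * y) < t * F x + (1 - t) * F y) ->
  {homo (fun n : nat => F n.+1%:R - F n%:R) : m n / (m <= n)%N >-> m <= n}.
Proof.
move=> F_convex; apply: homo_leq => [x|y x z|n]; [exact: lexx|exact: le_trans|].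
have n_neq : (n%:R : R) != n.+2%:R by rewrite eqr_nat ltn_eqF.
have half_gt0 : 0 < 1 / 2 :> R by lra.
have half_lt1 : 1 / 2 < 1 :> R by lra.
have := F_convex _ _ _ (ler0n _ n) (ler0n _ n.+2) n_neq half_gt0 half_lt1.
have -> : 1 / 2 * n%:R + (1 - 1 / 2) * n.+2%:R = n.+1%:R :> R.
  by rewrite -addn1 -addn2 !natrD; field.
lra.
Qed.

Lemma leq_unit_steps (f : nat -> nat) :
  (forall k, f k.+1 <= (f k).+1)%N ->
  forall k l, (l <= k)%N -> (f k <= f l + (k - l))%N.
Proof.
move=> step k l /subnK <-; rewrite addnK.
elim: (k - l)%N => [|n IH]; first by rewrite add0n addn0.
by rewrite addSn addnS (leq_trans (step _)).
Qed.

Section OptimalSale.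
Context (R : realType) (d : measure_display) (Omega : measurableType d)
  (P : probability Omega R) (sigma : nat -> Omega -> R) (F : R -> R).
Hypotheses (F0 : F 0 = 0) (F_ge0 : forall x, 0 <= x -> 0 <= F x).

Lemma admissible_cst k : admissible sigma k (fun _ _ => k).
Proof.
split=> // t n _; have [<-|kn] := eqVneq k n.
  rewrite (_ : [set _ | _] = setT); last exact/seteqP.
  by rewrite -(setD0 setT); apply: sigma_algebraCD; apply: sigma_algebra0.
rewrite (_ : [set _ | _] = set0); first exact: sigma_algebra0.
by apply/seteqP; split=> // w /= /eqP; rewrite (negbTE kn).
Qed.

Lemma value_ge0 k T : (0 <= value P sigma F k T)%E.
Proof.
apply/ereal_infP => _ [xi [_ ->]]; apply: integral_ge0 => w _.
apply: adde_ge0; last by rewrite lee_fin F_ge0.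
by apply: nneseries_ge0 => n _ _; case: ifP; rewrite lee_fin ?F_ge0.
Qed.

Lemma value_le_F k T : (value P sigma F k T <= (F k%:R)%:E)%E.
Proof.
apply: ereal_inf_lbound; exists (fun _ _ => k).
split; first exact: admissible_cst.
rewrite (_ : pathcost _ _ _ _ = cst (F k%:R)%:E).
  rewrite integral_cst // -[LHS]mule1; congr (_ * _)%E.
  exact/esym/probability_setT.
apply/funext => w; rewrite /pathcost subnn F0 eseries0 ?add0e // => i _ _.
by case: ifP.
Qed.

Lemma value_fin_num k T : value P sigma F k T \is a fin_num.
Proof.
by rewrite ge0_fin_numE ?value_ge0 // (le_lt_trans (value_le_F k T)) ?ltry.
Qed.

Lemma aopt_least_argmin k T : aopt P sigma F k T =
  least_argmin (fun a => fine (value P sigma F (k - a) T) + F a%:R) k.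
Proof.
congr head; apply: eq_filter => a; apply: eq_all => b.
by rewrite -lee_fin !EFinD !fineK ?value_fin_num.
Qed.

End OptimalSale.

Theorem corollary2p6 (R : realType) (d : measure_display)
  (Omega : measurableType d) (P : probability Omega R)
  (lam : R) (sigma : nat -> Omega -> R) (F : R -> R) :
  0 < lam ->
  poisson_arrivals P lam sigma ->
  F 0 = 0 ->
  (forall x, 0 <= x -> 0 <= F x) ->
  (forall x y, 0 <= x -> x < y -> F x < F y) ->
  (forall x y t, 0 <= x -> 0 <= y -> x != y -> 0 < t -> t < 1 ->
     F (t * x + (1 - t) * y) < t * F x + (1 - t) * F y) ->
  forall T : R, 0 <= T ->
    (forall k l : nat, (l <= k)%N ->
       (aopt P sigma F k T <= aopt P sigma F l T + (k - l))%N) /\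
    (forall k : nat, (aopt P sigma F k.+1 T <= aopt P sigma F k T + 1)%N).
Proof.
move=> _ _ F0 F_ge0 _ F_convex T _.
have step k : (aopt P sigma F k.+1 T <= aopt P sigma F k T + 1)%N.
  rewrite !aopt_least_argmin //.
  exact: (@least_argmin_shift _ (fun j => fine (value P sigma F j T)) _ _
    (convex_nat_increments F_convex)).
split=> //; apply: (@leq_unit_steps (fun k => aopt P sigma F k T)) => k.
by rewrite /= -[X in (_ <= X)%N]addn1 step.
Qed.
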